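(* Let $c_2,c_3$ be constants, $\mu(t)=t^2+c_2t+c_3$, and for $n\ge 0$ let $\vartheta_n(t)=(-4)^{-n}(2t+1/2+c_2)_n(-2t+1/2-c_2)_n$. Let $\{P_n\}_{n\ge0}$ be a sequence of monic polynomials in $\mu(t)$, $\deg P_n=n$, satisfying $$\mu(t)P_n=P_{n+1}+\beta_nP_n+\gamma_nP_{n-1}\quad(n\ge 0),\qquad P_{-1}=0,\ P_0=1,$$ and write $P_n=\sum_{k=0}^{n}A_{n,k}\vartheta_k(t)$, so that $A=(A_{n,k})_{n,k\ge0}$ is lower triangular with unit diagonal. Define the numbers $f_n$ by $\mu(t)\vartheta_n(t)=\vartheta_{n+1}(t)+f_n\vartheta_n(t)$, $n\ge0$. Then $$f_n=-\frac{c_2^2}{4}+\frac{(2n+1)^2}{16}+c_3,$$ and $$L\,A=A\,\mathbf{X}^1,\qquad \mathbf{X}^1:=X+\operatorname{diag}\{f_0,f_1,f_2,\ldots\},$$ where $L$ is the infinite tridiagonal matrix with diagonal entries $L_{n,n}=\beta_n$ ($n\ge0$), superdiagonal entries $L_{n,n+1}=1$, subdiagonal entries $L_{n,n-1}=\gamma_n$ ($n\ge1$), all other entries zero, and $X$ is the infinite matrix with $X_{n,n+1}=1$ and all other entries zero.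
   Context: Here $(a)_n=a(a+1)\cdots(a+n-1)$, $(a)_0=1$, is the Pochhammer symbol; each $\vartheta_n(t)$ is a monic polynomial of degree $n$ in the variable $\mu(t)$, and $\{\vartheta_n\}$ is a basis of the polynomials in $\mu(t)$. Indices of infinite matrices start at $0$. *)

From mathcomp Require Import all_boot all_order all_algebra.
Set Implicit Arguments. Unset Strict Implicit. Unset Printing Implicit Defensive.
Import Order.TTheory GRing.Theory Num.Theory.
Local Open Scope ring_scope.

Definition poch (R : comRingType) (a : {poly R}) (n : nat) : {poly R} :=
  \prod_(i < n) (a + (i%:R)%:P).

Definition mu (R : comRingType) (c2 c3 : R) : {poly R} :=
  'X^2 + c2 *: 'X + c3%:P.

Definition theta (R : fieldType) (c2 : R) (n : nat) : {poly R} :=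
  ((-4 : R) ^- n) *: (poch (2%:R *: 'X + (2^-1 + c2)%:P) n
                      * poch (- (2%:R *: 'X) + (2^-1 - c2)%:P) n).

Definition infmx (R : Type) := nat -> nat -> R.

(* Product of infinite matrices M N, for M whose row i is supported on
   columns j <= i+1 (true of the tridiagonal L and of the lower triangular A);
   for such M this is exactly the usual product \sum_j M i j * N j k. *)
Definition bandmul (R : ringType) (M N : infmx R) : infmx R :=
  fun i k => \sum_(j < i.+2) M i j * N j k.

Definition jacobiL (R : ringType) (beta gamma : nat -> R) : infmx R :=
  fun i j => if j == i.+1 then 1
             else if j == i then beta i
             else if j.+1 == i then gamma i
             else 0.

Definition shiftX (R : ringType) : infmx R :=
  fun i j => if j == i.+1 then 1 else 0.

Definition X1 (R : ringType) (f : nat -> R) : infmx R :=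
  fun i j => shiftX R i j + (if j == i then f i else 0).

From mathcomp Require Import all_boot all_order all_algebra ring zify.
Import Order.TTheory GRing.Theory Num.Theory.
Local Open Scope ring_scope.
Set Implicit Arguments. Unset Strict Implicit.

(* The Pochhammer recursion gives [theta_(n+1) = theta_n * mu c2 d_n] with
   [d_n = c2^2/4 - (2n+1)^2/16], so [mu c2 c3 * theta_n] is
   [theta_(n+1) + (c3 - d_n) theta_n], which is the formula for [f_n].
   Expanding [mu * P_n] and [P_(n+1) + beta_n P_n + gamma_n P_(n-1)] in the
   basis [theta_k] yields the n-th rows of [A X^1] and of [L A]; the
   recurrence makes the two polynomials equal, and since the [theta_k] are
   monic of strictly increasing degrees, the rows agree. *)
Section BandProducts.

Variable R : comNzRingType.
Implicit Types (A : infmx R) (beta gamma f : nat -> R).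

Lemma bandmul_jacobiL beta gamma A n k :
  bandmul (jacobiL beta gamma) A n k =
  A n.+1 k + beta n * A n k + gamma n * (if n is m.+1 then A m k else 0).
Proof.
rewrite /bandmul !big_ord_recr /= /jacobiL eqxx ifN ?eqxx ?mul1r; last by lia.
case: n => [|m]; first by rewrite big_ord0 add0r mulr0 addr0 addrC.
rewrite big_ord_recr /= big1 => [|i _]; last first.
  by rewrite !ifN ?mul0r //; have := ltn_ord i; lia.
by rewrite (ltn_eqF (ltnW (ltnSn _))) (ltn_eqF (ltnSn _)) eqxx; ring.
Qed.

Lemma bandmul_X1 A f n k :
  (forall i j, (i < j)%N -> A i j = 0) ->
  bandmul A (X1 f) n k = (if k is k'.+1 then A n k' else 0) + A n k * f k.
Proof.
move=> Alow; rewrite /bandmul /X1 /shiftX.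
under eq_bigr do rewrite mulrDr !(fun_if (fun x => _ * x)) mulr1 !mulr0.
rewrite big_split /= -!big_mkcond /=.
under [X in X + _]eq_bigl do rewrite eq_sym.
under [X in _ + X]eq_bigl do rewrite eq_sym.
rewrite (big_ord1_eq _ (fun j => A n j * f j)); congr (_ + _).
- case: k => [|k]; first by rewrite big1.
  under eq_bigl do rewrite eqSS.
  by rewrite (big_ord1_eq _ (A n)); case: ltnP => // /ltnW /Alow ->.
- by case: ltnP => // /ltnW /Alow ->; rewrite mul0r.
Qed.

End BandProducts.

Lemma monic_basis_coef_inj (R : nzRingType) (b : nat -> {poly R}) (a c : nat -> R) N :
  (forall k, b k \is monic) -> {homo (fun k => size (b k)) : i j / (i < j)%N} ->
  \sum_(k < N) a k *: b k = \sum_(k < N) c k *: b k ->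
  forall k, (k < N)%N -> a k = c k.
Proof.
move=> b_monic size_b_incr; elim: N => [//|N IHN].
rewrite !big_ord_recr /=.
set top := (size (b N)).-1.
have top_coef (d : nat -> R) : (\sum_(k < N) d k *: b k + d N *: b N)`_top = d N.
  rewrite coefD coefZ -lead_coefE (monicP (b_monic N)) mulr1 coef_sum big1 ?add0r //.
  move=> i _; rewrite coefZ nth_default ?mulr0 //.
  by rewrite -ltnS prednK ?size_b_incr // (leq_ltn_trans _ (size_b_incr _ _ (ltn_ord i))).
move=> sums_eq; have eq_top : a N = c N by rewrite -[a N]top_coef sums_eq top_coef.
rewrite eq_top in sums_eq; move/addIr: sums_eq => /IHN IH k.
by rewrite ltnS leq_eqVlt => /predU1P [-> //|]; apply: IH.
Qed.

Section Mu.

Variable R : comNzRingType.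

Lemma size_mu (c2 c3 : R) : size (mu c2 c3) = 3%N.
Proof.
rewrite /mu -addrA size_polyDl ?size_polyXn //.
rewrite (leq_ltn_trans (size_polyD _ _)) // gtn_max.
rewrite (leq_ltn_trans (size_scale_leq _ _)) ?size_polyX //.
exact: leq_ltn_trans (size_polyC_leq1 _) _.
Qed.

Lemma mu_monic (c2 c3 : R) : mu c2 c3 \is monic.
Proof. by rewrite monicE lead_coefE size_mu /mu !coefE /= mulr0 !addr0. Qed.

Lemma mu_shift (c2 c3 d : R) : mu c2 c3 = mu c2 d + (c3 - d)%:P.
Proof. by rewrite /mu -[RHS]addrA -polyCD [d + _]addrC subrK. Qed.

End Mu.

Section Theta.

Variable R : fieldType.
Hypothesis two_neq0 : (2 : R) != 0.

Let four_neq0 : (4 : R) != 0.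
Proof. by rewrite (_ : 4 = 2 * 2) ?mulf_neq0 //; ring. Qed.

Let sixteen_neq0 : (16 : R) != 0.
Proof. by rewrite (_ : 16 = 4 * 4) ?mulf_neq0 //; ring. Qed.

Lemma mul_linear_factors (a b : R) :
  (2%:R *: 'X + a%:P) * (- (2%:R *: 'X) + b%:P) =
  (-4) *: mu ((a - b) / 2) (- (a * b) / 4%:R).
Proof.
rewrite /mu !scalerDr !scalerA scale_polyC.
rewrite (_ : -4 * ((a - b) / 2) = 2 * (b - a)); last by field.
rewrite (_ : -4 * (- (a * b) / 4%:R) = a * b); last by field.
rewrite -!mul_polyC; ring.
Qed.

Lemma thetaS (c2 : R) n :
  theta c2 n.+1 = theta c2 n * mu c2 (c2 ^+ 2 / 4%:R - (2 * n + 1)%:R ^+ 2 / 16%:R).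
Proof.
set a := 2^-1 + c2 + n%:R; set b := 2^-1 - c2 + n%:R.
have -> : mu c2 (c2 ^+ 2 / 4%:R - (2 * n + 1)%:R ^+ 2 / 16%:R) =
          (-4)^-1 *: ((2%:R *: 'X + a%:P) * (- (2%:R *: 'X) + b%:P)).
  rewrite mul_linear_factors scalerA mulVf ?oppr_eq0 // scale1r.
  by congr mu; rewrite /a /b; field; rewrite ?two_neq0 ?four_neq0 ?sixteen_neq0.
rewrite /theta /poch !big_ord_recr /= -scalerAl -scalerAr scalerA exprSr invfM.
by congr (_ *: _); rewrite /a /b !polyCD; ring.
Qed.

Lemma theta0 (c2 : R) : theta c2 0 = 1.
Proof. by rewrite /theta /poch !big_ord0 expr0 invr1 mulr1 scale1r. Qed.

Lemma theta_monic (c2 : R) n : theta c2 n \is monic.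
Proof.
elim: n => [|n IHn]; first by rewrite theta0 monic1.
by rewrite thetaS monicMr ?mu_monic.
Qed.

Lemma size_theta (c2 : R) n : size (theta c2 n) = (2 * n).+1.
Proof.
elim: n => [|n IHn]; first by rewrite theta0 size_poly1.
rewrite thetaS size_monicM ?monic_neq0 ?theta_monic ?mu_monic //.
by rewrite IHn size_mu; lia.
Qed.

Lemma mu_theta (c2 c3 : R) n :
  mu c2 c3 * theta c2 n =
  theta c2 n.+1 + (- (c2 ^+ 2) / 4%:R + (2 * n + 1)%:R ^+ 2 / 16%:R + c3) *: theta c2 n.
Proof.
rewrite (mu_shift c2 c3 (c2 ^+ 2 / 4%:R - (2 * n + 1)%:R ^+ 2 / 16%:R)).
by rewrite mulrDl mulrC -thetaS mul_polyC; congr (_ + _ *: _); ring.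
Qed.

End Theta.

Section Expansion.

Variables (R : comNzRingType) (b P : nat -> {poly R}) (A : infmx R).
Hypothesis A_lower : forall i j, (i < j)%N -> A i j = 0.
Hypothesis P_expand : forall n, P n = \sum_(k < n.+1) A n k *: b k.

Lemma P_expand_widen n m : (n < m)%N -> P n = \sum_(k < m) A n k *: b k.
Proof.
move=> lt_nm; rewrite P_expand (big_ord_widen m (fun k => A n k *: b k) lt_nm).
by rewrite big_mkcond; apply: eq_bigr => k _; case: ltnP => // /A_lower ->; rewrite scale0r.
Qed.

Lemma recurrence_expand (beta gamma : nat -> R) n :
  P n.+1 + beta n *: P n + gamma n *: (if n is m.+1 then P m else 0) =
  \sum_(k < n.+2) bandmul (jacobiL beta gamma) A n k *: b k.
Proof.
under eq_bigr do rewrite bandmul_jacobiL !scalerDl -!scalerA.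
rewrite !big_split /= -!scaler_sumr -P_expand -P_expand_widen //; congr (_ + _ *: _).
case: n => [|m]; first by rewrite big1 // => k _; rewrite scale0r.
by apply: P_expand_widen; lia.
Qed.

Lemma mul_expand (q : {poly R}) (f : nat -> R) n :
  (forall k, q * b k = b k.+1 + f k *: b k) ->
  q * P n = \sum_(k < n.+2) bandmul A (X1 f) n k *: b k.
Proof.
move=> q_b; under eq_bigr do rewrite bandmul_X1 // scalerDl -scalerA.
rewrite big_split /= big_ord_recl scale0r add0r [X in _ + X]big_ord_recr /=.
rewrite A_lower // scale0r addr0 P_expand mulr_sumr -big_split /=.
by apply: eq_bigr => k _; rewrite -scalerAr q_b scalerDr.
Qed.

End Expansion.

Theorem lemma2p1 (R : numFieldType) (c2 c3 : R)
  (P : nat -> {poly R}) (beta gamma : nat -> R)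
  (A : nat -> nat -> R) (f : nat -> R) :
  (* P_n is a monic polynomial of degree n in mu(t) *)
  (forall n, exists q : {poly R},
       q \is monic /\ size q = n.+1 /\ P n = q \Po mu c2 c3) ->
  (* three-term recurrence, P_{-1} = 0, P_0 = 1 *)
  P 0 = 1 ->
  (forall n, mu c2 c3 * P n =
             P n.+1 + beta n *: P n
             + gamma n *: (if n is m.+1 then P m else 0)) ->
  (* expansion P_n = sum_{k=0}^n A_{n,k} theta_k, A lower triangular *)
  (forall n k, (n < k)%N -> A n k = 0) ->
  (forall n, P n = \sum_(k < n.+1) A n k *: theta c2 k) ->
  (* definition of f_n *)
  (forall n, mu c2 c3 * theta c2 n = theta c2 n.+1 + f n *: theta c2 n) ->
  (forall n, f n = - (c2 ^+ 2) / 4%:R + ((2 * n + 1)%:R) ^+ 2 / 16%:R + c3)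
  /\ (forall n k, bandmul (jacobiL beta gamma) A n k = bandmul A (X1 f) n k).
Proof.
move=> _ _ P_rec A_lower P_expand mu_theta_f.
have two_neq0 : (2 : R) != 0 by rewrite pnatr_eq0.
have fE n : f n = - (c2 ^+ 2) / 4%:R + ((2 * n + 1)%:R) ^+ 2 / 16%:R + c3.
  have theta_neq0 := monic_neq0 (theta_monic two_neq0 c2 n).
  have := mu_theta two_neq0 c2 c3 n; rewrite mu_theta_f => /addrI/eqP.
  by rewrite -subr_eq0 -scalerBl scaler_eq0 subr_eq0 (negPf theta_neq0) orbF => /eqP.
split=> // n k.
have [lt_k_n2 | le_n2_k] := ltnP k n.+2.
  have size_theta_incr : {homo (fun k => size (theta c2 k)) : i j / (i < j)%N}.
    by move=> i j lt_ij /=; rewrite !(size_theta two_neq0) ltnS ltn_pmul2l.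
  apply: (monic_basis_coef_inj (theta_monic two_neq0 c2) size_theta_incr) lt_k_n2.
  rewrite -(recurrence_expand A_lower P_expand) -P_rec.
  exact: (mul_expand A_lower P_expand).
case: k le_n2_k => // k lt_n_k.
rewrite bandmul_jacobiL bandmul_X1 //.
by case: n lt_n_k => [|m] lt_m_k; rewrite !A_lower ?mulr0 ?mul0r ?addr0 //; lia.
Qed.
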